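(* Let $\mu\in\mathbb{R}$, $\alpha>0$, $\lambda_1,\dots,\lambda_n,\lambda^*_1,\dots,\lambda^*_n>0$. Let $X_1,\dots,X_n$ be independent with $X_i\sim\mathrm{Fr\acute{e}}(\mu,\lambda_i,\alpha)$ and $X^*_1,\dots,X^*_n$ independent with $X^*_i\sim\mathrm{Fr\acute{e}}(\mu,\lambda^*_i,\alpha)$. (i) If $\alpha\ge1$ and $\sum_{i=j}^{n}\lambda^*_{(i)}\le\sum_{i=j}^{n}\lambda_{(i)}$ for all $j=1,\dots,n$, then $X_{n:n}\ge_{\rm rh}X^*_{n:n}$. (ii) If $0<\alpha\le1$ and $\sum_{i=1}^{j}\lambda^*_{(i)}\ge\sum_{i=1}^{j}\lambda_{(i)}$ for all $j=1,\dots,n$, then $X_{n:n}\le_{\rm rh}X^*_{n:n}$.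
   Context: $X\sim \mathrm{Fr\acute{e}}(\mu,\lambda,\alpha)$ means distribution function $\exp\{-((x-\mu)/\lambda)^{-\alpha}\}$ for $x>\mu$. $X_{n:n}=\max_i X_i$. $\lambda_{(1)}\le\dots\le\lambda_{(n)}$ are the components in increasing order. $X\le_{\rm rh}Y$ means the reversed hazard rate $F'/F$ of $X$ is pointwise $\le$ that of $Y$. *)

From mathcomp Require Import all_boot all_order all_algebra.
From mathcomp Require Import all_classical all_reals all_analysis.
Set Implicit Arguments. Unset Strict Implicit. Unset Printing Implicit Defensive.
Import Order.TTheory GRing.Theory Num.Theory.
Local Open Scope ring_scope.

Definition frechet_cdf {R : realType} (mu lam alpha : R) (x : R) : R :=
  if mu < x then expR (- (((x - mu) / lam) `^ (- alpha))) else 0.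

(* Distribution function of X_{n:n} = max_i X_i for independent
   X_i ~ Fre(mu, lam_i, alpha): the product of the marginal cdfs. *)
Definition max_frechet_cdf {R : realType} (n : nat) (mu alpha : R)
  (lam : n.-tuple R) (x : R) : R :=
  \prod_(i < n) frechet_cdf mu (tnth lam i) alpha x.

(* Reversed hazard rate F'/F (with the MathComp convention y/0 = 0,
   so it is 0 outside the support). *)
Definition rev_hazard {R : realType} (F : R -> R) (x : R) : R :=
  derive1 F x / F x.

(* X <=_rh Y, expressed on distribution functions F (of X) and G (of Y). *)
Definition rh_le {R : realType} (F G : R -> R) : Prop :=
  forall x : R, rev_hazard F x <= rev_hazard G x.

(* Components in increasing order: (ordered lam)`_k = lambda_{(k+1)}. *)
Definition ordered {R : realType} (n : nat) (lam : n.-tuple R) : seq R :=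
  sort <=%R (tval lam).

From mathcomp Require Import all_boot all_order all_algebra.
From mathcomp Require Import all_classical all_reals all_analysis.
From mathcomp Require Import lra.
Import Order.TTheory GRing.Theory Num.Theory.
Local Open Scope ring_scope.
Set Implicit Arguments. Unset Strict Implicit. Unset Printing Implicit Defensive.

(* The reversed hazard rate of X_{n:n} is
   (sum_i lambda_i^alpha) * alpha (x - mu)^(-alpha-1), so both claims reduce to
   comparing the power sums sum_i lambda_i^alpha.  For f = x^alpha, increasing
   and convex (alpha >= 1) or concave (alpha <= 1), the tangent lines at a
   sorted vector a give sum_i f(b_i) - sum_i f(a_i) >= (resp. <=)
   sum_i f'(a_i) (b_i - a_i).  As f'(a_i) is nonnegative and monotone in i,
   Abel summation shows that the tail (resp. prefix) sum hypotheses fix the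
   sign of the right-hand side. *)

Section TangentLine.
Variables (R : realType) (f df : R -> R).
Hypothesis f_derive : forall z : R, 0 < z -> is_derive z 1 f (df z).

Lemma MVT_pos (u v : R) : 0 < u -> u < v ->
  exists2 c, u < c < v & f v - f u = df c * (v - u).
Proof.
move=> u_gt0 uv.
have f_derive_in z : z \in `]u, v[ -> is_derive z 1 f (df z).
  by rewrite in_itv /= => /andP[uz _]; apply: f_derive (lt_trans u_gt0 uz).
have f_derivable z : z \in `[u, v] -> derivable f z 1.
  by rewrite in_itv /= => /andP[uz _]; have [] := f_derive (lt_le_trans u_gt0 uz).
have [c] := MVT uv f_derive_in (derivable_within_continuous f_derivable).
by rewrite in_itv /=; exists c.
Qed.

Lemma convex_tangent_le (x y : R) :
  {in Num.pos &, {homo df : u v / u <= v}} -> 0 < x -> 0 < y ->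
  f x + df x * (y - x) <= f y.
Proof.
move=> df_homo x_gt0 y_gt0.
case: (ltgtP x y) => [xy|yx|<-]; last by rewrite subrr mulr0 addr0.
- have [c /andP[xc _] fE] := MVT_pos x_gt0 xy.
  rewrite -lerBrDl fE ler_pM2r ?subr_gt0 //.
  by apply: df_homo; rewrite ?posrE ?(lt_trans x_gt0 xc) ?ltW.
- have [c /andP[yc cx] fE] := MVT_pos y_gt0 yx.
  have : df c <= df x by apply: df_homo; rewrite ?posrE ?(lt_trans y_gt0 yc) ?ltW.
  by rewrite -(@ler_pM2r _ (x - y)) ?subr_gt0 // -fE; lra.
Qed.

Lemma concave_tangent_ge (x y : R) :
  {in Num.pos &, {homo df : u v / u <= v >-> v <= u}} -> 0 < x -> 0 < y ->
  f y <= f x + df x * (y - x).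
Proof.
move=> df_homo x_gt0 y_gt0.
case: (ltgtP x y) => [xy|yx|<-]; last by rewrite subrr mulr0 addr0.
- have [c /andP[xc _] fE] := MVT_pos x_gt0 xy.
  rewrite -lerBlDl fE ler_pM2r ?subr_gt0 //.
  by apply: df_homo; rewrite ?posrE ?(lt_trans x_gt0 xc) ?ltW.
- have [c /andP[yc cx] fE] := MVT_pos y_gt0 yx.
  have : df x <= df c by apply: df_homo; rewrite ?posrE ?(lt_trans y_gt0 yc) ?ltW.
  by rewrite -(@ler_pM2r _ (x - y)) ?subr_gt0 // -fE; lra.
Qed.

End TangentLine.

Section AbelSummation.
Variables (R : realDomainType) (c d : nat -> R) (n : nat).

Lemma ler_abel_tail :
  (forall i, (i.+1 < n)%N -> c i <= c i.+1) ->
  (forall j, (j < n)%N -> 0 <= \sum_(j <= i < n) d i) ->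
  forall j, c j * \sum_(j <= i < n) d i <= \sum_(j <= i < n) c i * d i.
Proof.
move=> c_homo d_tail j.
have [/subnKC|/ltnW nj] := leqP j n; last by rewrite !big_geq ?mulr0.
move: (n - j)%N => m; elim: m j => [|m IHm] j jmn.
  by rewrite -jmn addn0 !big_geq ?mulr0.
have jn : (j < n)%N by rewrite -jmn addnS ltnS leq_addr.
have {}IHm := IHm j.+1 (etrans (addSnnS j m) jmn).
rewrite big_ltn // [X in _ <= X]big_ltn // mulrDr.
have [j1n|nj1] := ltnP j.+1 n; last by rewrite !big_geq // mulr0 !addr0.
have := ler_wpM2r (d_tail _ j1n) (c_homo _ j1n); lra.
Qed.

Lemma ler_abel_prefix :
  (forall i, (i.+1 < n)%N -> c i.+1 <= c i) ->
  (forall j, (j < n)%N -> 0 <= \sum_(0 <= i < j.+1) d i) ->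
  forall j, (j < n)%N -> c j * \sum_(0 <= i < j.+1) d i <= \sum_(0 <= i < j.+1) c i * d i.
Proof.
move=> c_homo d_prefix; elim=> [|j IHj] jn; first by rewrite !big_nat1.
rewrite big_nat_recr //= [X in _ <= X]big_nat_recr //=.
have := ler_wpM2r (d_prefix _ (ltnW jn)) (c_homo _ jn).
have := IHj (ltnW jn); rewrite mulrDr; lra.
Qed.

End AbelSummation.

Section WeakMajorization.
Variables (R : realType) (f df : R -> R).
Hypothesis f_derive : forall z : R, 0 < z -> is_derive z 1 f (df z).
Hypothesis df_ge0 : forall z : R, 0 < z -> 0 <= df z.
Variables (n : nat) (a b : nat -> R).
Hypothesis a_gt0 : forall i, (i < n)%N -> 0 < a i.
Hypothesis b_gt0 : forall i, (i < n)%N -> 0 < b i.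
Hypothesis a_sorted : forall i, (i.+1 < n)%N -> a i <= a i.+1.

Lemma convex_sum_le_of_tail_sums :
  {in Num.pos &, {homo df : u v / u <= v}} ->
  (forall j, (j < n)%N -> \sum_(j <= i < n) a i <= \sum_(j <= i < n) b i) ->
  \sum_(0 <= i < n) f (a i) <= \sum_(0 <= i < n) f (b i).
Proof.
move=> df_homo tail_le.
have [->|n_gt0] := posnP n; first by rewrite !big_geq.
pose c i := df (a i).
apply: (@le_trans _ _ (\sum_(0 <= i < n) (f (a i) + c i * (b i - a i)))); last first.
  by apply: ler_sum_nat => i /andP[_ i_lt]; apply: convex_tangent_le; auto.
rewrite big_split /= lerDl.
have c_homo i : (i.+1 < n)%N -> c i <= c i.+1.
  by move=> i_lt; apply: df_homo; rewrite ?a_sorted // posrE a_gt0 // ltnW.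
have tail_ge0 j : (j < n)%N -> 0 <= \sum_(j <= i < n) (b i - a i).
  by move=> j_lt; rewrite sumrB subr_ge0 tail_le.
apply: le_trans (ler_abel_tail c_homo tail_ge0 0).
by rewrite mulr_ge0 ?df_ge0 ?a_gt0 ?tail_ge0.
Qed.

Lemma concave_sum_le_of_prefix_sums :
  {in Num.pos &, {homo df : u v / u <= v >-> v <= u}} ->
  (forall j, (j < n)%N -> \sum_(0 <= i < j.+1) b i <= \sum_(0 <= i < j.+1) a i) ->
  \sum_(0 <= i < n) f (b i) <= \sum_(0 <= i < n) f (a i).
Proof.
move=> df_homo prefix_le.
have [->|n_gt0] := posnP n; first by rewrite !big_geq.
pose c i := df (a i).
apply: (@le_trans _ _ (\sum_(0 <= i < n) (f (a i) - c i * (a i - b i)))).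
  apply: ler_sum_nat => i /andP[_ i_lt]; rewrite -mulrN opprB.
  by apply: concave_tangent_ge; auto.
rewrite sumrB gerBl.
have c_homo i : (i.+1 < n)%N -> c i.+1 <= c i.
  by move=> i_lt; apply: df_homo; rewrite ?a_sorted // posrE a_gt0 // ltnW.
have prefix_ge0 j : (j < n)%N -> 0 <= \sum_(0 <= i < j.+1) (a i - b i).
  by move=> j_lt; rewrite sumrB subr_ge0 prefix_le.
have last_lt : (n.-1 < n)%N by rewrite ltn_predL.
have := ler_abel_prefix c_homo prefix_ge0 last_lt.
have := prefix_ge0 _ last_lt.
rewrite prednK // => sum_ge0; apply: le_trans.
by rewrite mulr_ge0 ?df_ge0 ?a_gt0.
Qed.

End WeakMajorization.

Lemma le0_ger_powR (R : realType) (r : R) : r <= 0 ->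
  {in Num.pos &, {homo (@powR R)^~ r : x y / x <= y >-> y <= x}}.
Proof.
move=> r_le0 x y; rewrite !posrE => x_gt0 y_gt0 xy.
have [s s_ge0 ->] : exists2 s : R, 0 <= s & r = - s.
  by exists (- r); rewrite ?oppr_ge0 ?opprK.
rewrite !powRN lef_pV2 ?posrE ?powR_gt0 //.
exact: (ge0_ler_powR s_ge0 (ltW x_gt0) (ltW y_gt0) xy).
Qed.

Section PowerSums.
Variables (R : realType) (alpha : R) (n : nat) (a b : nat -> R).
Hypothesis a_gt0 : forall i, (i < n)%N -> 0 < a i.
Hypothesis b_gt0 : forall i, (i < n)%N -> 0 < b i.
Hypothesis a_sorted : forall i, (i.+1 < n)%N -> a i <= a i.+1.

Let dpowR (z : R) := alpha * z `^ (alpha - 1).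

Lemma powR_sum_le_of_tail_sums : 1 <= alpha ->
  (forall j, (j < n)%N -> \sum_(j <= i < n) a i <= \sum_(j <= i < n) b i) ->
  \sum_(0 <= i < n) a i `^ alpha <= \sum_(0 <= i < n) b i `^ alpha.
Proof.
move=> alpha_ge1.
apply: (convex_sum_le_of_tail_sums (df := dpowR) (@is_derive1_powR R alpha)) => //.
- by move=> z _; rewrite mulr_ge0 ?powR_ge0 // (le_trans ler01).
- move=> u v u_gt0 v_gt0 uv; rewrite ler_wpM2l ?(le_trans ler01) //.
  by apply: (ge0_ler_powR _ (ltW u_gt0) (ltW v_gt0) uv); rewrite subr_ge0.
Qed.

Lemma powR_sum_le_of_prefix_sums : 0 <= alpha <= 1 ->
  (forall j, (j < n)%N -> \sum_(0 <= i < j.+1) b i <= \sum_(0 <= i < j.+1) a i) ->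
  \sum_(0 <= i < n) b i `^ alpha <= \sum_(0 <= i < n) a i `^ alpha.
Proof.
move=> /andP[alpha_ge0 alpha_le1].
apply: (concave_sum_le_of_prefix_sums (df := dpowR) (@is_derive1_powR R alpha)) => //.
- by move=> z _; rewrite mulr_ge0 ?powR_ge0.
- move=> u v u_gt0 v_gt0 uv; rewrite ler_wpM2l //.
  by apply: le0_ger_powR; rewrite ?subr_le0.
Qed.

End PowerSums.

Definition pow_sum (R : realType) (alpha : R) (s : seq R) : R :=
  \sum_(x <- s) x `^ alpha.

Definition unit_frechet_rev_hazard (R : realType) (mu alpha x : R) : R :=
  if mu < x then alpha * (x - mu) `^ (- alpha - 1) else 0.

Section Frechet.
Variable R : realType.
Implicit Types (mu alpha x : R).

Lemma frechet_cdfE mu lam alpha x : 0 < lam -> mu < x ->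
  frechet_cdf mu lam alpha x = expR (- (lam `^ alpha * (x - mu) `^ (- alpha))).
Proof.
move=> lam_gt0 mu_lt_x; rewrite /frechet_cdf mu_lt_x mulrC.
rewrite powRM ?subr_ge0 ?invr_ge0 ?ltW // -powR_inv1 ?ltW // -powRrM.
by rewrite mulN1r opprK.
Qed.

Lemma max_frechet_cdfE n mu alpha (lam : n.-tuple R) x :
  (forall i, 0 < tnth lam i) -> mu < x ->
  max_frechet_cdf mu alpha lam x =
    expR (- (pow_sum alpha lam * (x - mu) `^ (- alpha))).
Proof.
move=> lam_gt0 mu_lt_x; rewrite /max_frechet_cdf /pow_sum big_tuple.
under eq_bigr do rewrite frechet_cdfE //.
by rewrite -expR_sum mulr_suml sumrN.
Qed.

Lemma is_derive_frechet_exp (S mu alpha x : R) : mu < x ->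
  is_derive x 1 (fun y => expR (- (S * (y - mu) `^ (- alpha))))
    (expR (- (S * (x - mu) `^ (- alpha))) *
       (S * (alpha * (x - mu) `^ (- alpha - 1)))).
Proof.
move=> mu_lt_x.
have pow_derive : is_derive x 1 (fun y => (y - mu) `^ (- alpha))
                             (- alpha * (x - mu) `^ (- alpha - 1)).
  have x_mu_gt0 : 0 < x - mu by rewrite subr_gt0.
  have := is_derive1_comp (g := fun y => y - mu)
    (is_derive1_powR (- alpha) x_mu_gt0) (is_derive_shift x 1 (- mu)).
  by rewrite mulr1.
have := is_derive1_comp (is_derive_expR _) (is_deriveN (is_deriveZ S pow_derive)).
by rewrite mulNr scalerN opprK.
Qed.

Lemma rev_hazard_max_frechet n mu alpha (lam : n.-tuple R) x :
  (forall i, 0 < tnth lam i) ->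
  rev_hazard (max_frechet_cdf mu alpha lam) x =
    pow_sum alpha lam * unit_frechet_rev_hazard mu alpha x.
Proof.
move=> lam_gt0; rewrite /rev_hazard /unit_frechet_rev_hazard.
case: ifPn => [mu_lt_x|]; last first.
  rewrite -leNgt mulr0 => x_le_mu; case: n lam lam_gt0 => [|n] lam _.
    have -> : max_frechet_cdf mu alpha lam = cst 1.
      by apply/funext => y; rewrite /max_frechet_cdf big_ord0.
    by rewrite derive1_cst mul0r.
  rewrite /max_frechet_cdf (bigD1 ord0) //= /frechet_cdf ltNge x_le_mu.
  by rewrite mul0r invr0 mulr0.
set S := pow_sum alpha lam.
have -> : derive1 (max_frechet_cdf mu alpha lam) x =
          derive1 (fun y => expR (- (S * (y - mu) `^ (- alpha)))) x.
  rewrite !derive1E; apply: near_eq_derive.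
  by near=> y; rewrite max_frechet_cdfE //; near: y; exact: lt_nbhsr.
rewrite derive1E; have [_ ->] := is_derive_frechet_exp S alpha mu_lt_x.
by rewrite max_frechet_cdfE // mulrAC mulfV ?gt_eqF ?expR_gt0 // mul1r.
Unshelve. all: by end_near.
Qed.

Lemma unit_frechet_rev_hazard_ge0 mu alpha x : 0 <= alpha ->
  0 <= unit_frechet_rev_hazard mu alpha x.
Proof.
move=> alpha_ge0; rewrite /unit_frechet_rev_hazard.
by case: ifP; rewrite ?mulr_ge0 ?powR_ge0.
Qed.

End Frechet.

Section Ordered.
Variables (R : realType) (n : nat) (lam : n.-tuple R).

Lemma pow_sum_ordered (alpha : R) :
  pow_sum alpha lam = \sum_(0 <= i < n) (ordered lam)`_i `^ alpha.
Proof.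
rewrite /pow_sum -(perm_big _ (permEl (perm_sort <=%R lam))).
by rewrite (big_nth 0) size_sort size_tuple.
Qed.

Lemma ordered_gt0 : (forall i, 0 < tnth lam i) ->
  forall i, (i < n)%N -> 0 < (ordered lam)`_i.
Proof.
move=> lam_gt0 i i_lt; have : (ordered lam)`_i \in ordered lam.
  by rewrite mem_nth // size_sort size_tuple.
by rewrite mem_sort => /tnthP[j ->].
Qed.

Lemma ordered_nondecreasing i : (i.+1 < n)%N -> (ordered lam)`_i <= (ordered lam)`_i.+1.
Proof.
move=> i_lt; apply: (sorted_leq_nth le_trans lexx 0 (sort_sorted le_total _)) => //;
  by rewrite inE size_sort size_tuple // ltnW.
Qed.

End Ordered.

Lemma rh_le_max_frechet (R : realType) n (mu alpha : R) (lam lamS : n.-tuple R) :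
  0 <= alpha -> (forall i, 0 < tnth lam i) -> (forall i, 0 < tnth lamS i) ->
  pow_sum alpha lam <= pow_sum alpha lamS ->
  rh_le (max_frechet_cdf mu alpha lam) (max_frechet_cdf mu alpha lamS).
Proof.
move=> alpha_ge0 lam_gt0 lamS_gt0 sum_le x.
by rewrite !rev_hazard_max_frechet // ler_wpM2r // unit_frechet_rev_hazard_ge0.
Qed.

Theorem mainTheorem10 (R : realType) (n : nat) (mu alpha : R)
  (lam lamS : n.-tuple R) :
  0 < alpha ->
  (forall i : 'I_n, 0 < tnth lam i) ->
  (forall i : 'I_n, 0 < tnth lamS i) ->
  (* (i) *)
  (1 <= alpha ->
   (forall j : 'I_n,
      \sum_(j <= i < n) (ordered lamS)`_i <= \sum_(j <= i < n) (ordered lam)`_i) ->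
   rh_le (max_frechet_cdf mu alpha lamS) (max_frechet_cdf mu alpha lam))
  /\
  (* (ii) *)
  (alpha <= 1 ->
   (forall j : 'I_n,
      \sum_(0 <= i < j.+1) (ordered lam)`_i <= \sum_(0 <= i < j.+1) (ordered lamS)`_i) ->
   rh_le (max_frechet_cdf mu alpha lam) (max_frechet_cdf mu alpha lamS)).
Proof.
move=> alpha_gt0 lam_gt0 lamS_gt0; have alpha_ge0 := ltW alpha_gt0.
split=> [alpha_ge1 tail_le | alpha_le1 prefix_le];
  apply: rh_le_max_frechet => //; rewrite !pow_sum_ordered.
- apply: powR_sum_le_of_tail_sums => //; try exact: ordered_gt0.
  + exact: ordered_nondecreasing.
  + by move=> j j_lt; apply: (tail_le (Ordinal j_lt)).
- apply: powR_sum_le_of_prefix_sums; rewrite ?alpha_ge0 //; try exact: ordered_gt0.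
  + exact: ordered_nondecreasing.
  + by move=> j j_lt; apply: (prefix_le (Ordinal j_lt)).
Qed.
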